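(* Let $R$ be a graded ring and $\mathfrak p\in\operatorname{Spec}^h(R)$ a homogeneous prime ideal. Then the period of the local graded ring $R_{\mathfrak p}$ equals \[ \gcd\bigl(\deg(f)\ \bigm\vert\ f\in R \text{ homogeneous},\ f\notin\mathfrak p,\ \deg(f)\ne0\bigr), \] with the convention $\gcd(\emptyset)=0$.
   Context: A graded ring is a $\mathbb Z$-graded ring $R=\bigoplus_{d\in\mathbb Z}R_d$ (a monoid in graded abelian groups) for which there is $\epsilon\in R_0^\times$ with $rs=\epsilon^{\deg(r)\deg(s)}sr$ for homogeneous $r,s$. $R_{\mathfrak p}$ is the localization at the homogeneous elements not in $\mathfrak p$. The period of a graded ring $S$ is the smallest $d>0$ such that $S_d$ contains a unit, or $0$ if no unit of positive degree exists. *)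

From HB Require Import structures.
From mathcomp Require Import all_boot all_order all_algebra.
Set Implicit Arguments. Unset Strict Implicit. Unset Printing Implicit Defensive.
Import Order.TTheory GRing.Theory Num.Theory.
Local Open Scope ring_scope.

(* A Z-graded ring: a ring R together with its homogeneous components
   G d (d : int), forming a direct-sum decomposition R = (+)_d G d,
   with G d * G e <= G (d+e), 1 \in G 0, and an eps \in (G 0)^x such that
   r s = eps^(deg r * deg s) s r for homogeneous r, s. *)
Record is_graded_ring (R : unitRingType) (G : int -> pred R) : Prop := {
  gr_zero  : forall d, 0 \in G d;
  gr_sub   : forall d x y, x \in G d -> y \in G d -> x - y \in G d;
  gr_one   : 1 \in G 0;
  gr_mul   : forall d e x y, x \in G d -> y \in G e -> x * y \in G (d + e);
  gr_span  : forall r : R, exists (s : seq int) (f : int -> R),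
               (forall d, f d \in G d) /\ r = \sum_(d <- s) f d;
  gr_direct : forall (s : seq int) (f : int -> R), uniq s ->
               (forall d, f d \in G d) -> \sum_(d <- s) f d = 0 ->
               forall d, d \in s -> f d = 0;
  gr_eps   : exists eps : R, [/\ eps \in G 0, eps \is a GRing.unit &
               forall d e r s, r \in G d -> s \in G e ->
                 r * s = eps ^ (d * e) * (s * r)]
}.

Definition homog (R : unitRingType) (G : int -> pred R) (r : R) : Prop :=
  exists d, r \in G d.

Record is_hprime (R : unitRingType) (G : int -> pred R) (p : pred R) : Prop := {
  hp_zero  : 0 \in p;
  hp_sub   : forall x y, x \in p -> y \in p -> x - y \in p;
  hp_mull  : forall r x, x \in p -> r * x \in p;
  hp_mulr  : forall r x, x \in p -> x * r \in p;
  hp_homog : forall (s : seq int) (f : int -> R), uniq s ->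
               (forall d, f d \in G d) -> \sum_(d <- s) f d \in p ->
               forall d, d \in s -> f d \in p;
  hp_proper : 1 \notin p;
  hp_prime : forall a b, homog G a -> homog G b -> a * b \in p ->
               a \in p \/ b \in p
}.

Definition hS (R : unitRingType) (G : int -> pred R) (p : pred R) (s : R) :=
  homog G s /\ s \notin p.

(* phi : R -> L is (a model of) the graded localization R_p of R at the
   homogeneous elements not in p: a graded ring morphism inverting S such
   that every element of L is a fraction phi r / phi s (s \in S) and the
   kernel of phi is {r | r s = 0 for some s \in S}. *)
Record is_hlocalization (R L : unitRingType) (G : int -> pred R)
    (p : pred R) (H : int -> pred L) (phi : {rmorphism R -> L}) : Prop := {
  hl_graded : forall d r, r \in G d -> phi r \in H d;
  hl_unit   : forall s, hS G p s -> phi s \is a GRing.unit;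
  hl_frac   : forall x : L, exists r s, hS G p s /\ x = phi r / phi s;
  hl_ker    : forall r, phi r = 0 -> exists s, hS G p s /\ r * s = 0
}.

Definition is_period (L : unitRingType) (H : int -> pred L) (n : nat) : Prop :=
  (n = 0%N /\ forall (m : nat) (x : L), (0 < m)%N -> x \in H m ->
                                       x \isn't a GRing.unit)
  \/ [/\ (0 < n)%N,
         exists x : L, x \in H n /\ x \is a GRing.unit
       & forall (m : nat) (x : L), (0 < m < n)%N -> x \in H m ->
                                  x \isn't a GRing.unit].

(* g (>= 0) is the gcd of the set D of integers (so gcd(empty) = 0). *)
Definition is_gcd_set (D : int -> Prop) (g : nat) : Prop :=
  (forall d, D d -> (g%:Z %| d)%Z) /\
  (forall c : int, (forall d, D d -> (c %| d)%Z) -> (c %| g%:Z)%Z).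

(* The degrees of the homogeneous units of R_p form a subgroup U of Z, and the
   period of R_p is the non-negative generator of U.  A homogeneous f outside p
   becomes a unit of degree deg f in R_p.  Conversely, if x = r/s is a unit of
   degree m, the component r' of r of degree m + deg s still satisfies
   r'/s = x, so r' is a unit in R_p and therefore lies outside p; hence
   m = deg r' - deg s.  So U is generated by the degrees of the homogeneous
   elements outside p, and its generator is their gcd. *)

From mathcomp Require Import all_boot all_algebra.
From Stdlib Require Import Classical.
Import GRing.Theory.
Set Implicit Arguments. Unset Strict Implicit. Unset Printing Implicit Defensive.
Local Open Scope ring_scope.

Section GradedRing.

Variables (R : unitRingType) (G : int -> pred R).
Hypothesis hG : is_graded_ring G.

Lemma gr_opp d x : x \in G d -> - x \in G d.
Proof. by move=> hx; rewrite -sub0r; apply: (gr_sub hG) => //; apply: gr_zero. Qed.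

Lemma gr_add d x y : x \in G d -> y \in G d -> x + y \in G d.
Proof. by move=> hx hy; rewrite -[y]opprK; apply: (gr_sub hG) => //; apply: gr_opp. Qed.

Lemma gr_natmul d x n : x \in G d -> x *+ n \in G d.
Proof.
move=> hx; elim: n => [|n IH]; first exact: gr_zero.
by rewrite mulrS; apply: gr_add.
Qed.

Lemma gr_span_uniq r : exists (s : seq int) (f : int -> R),
  [/\ uniq s, forall d, f d \in G d & r = \sum_(d <- s) f d].
Proof.
have [s [f [hf ->]]] := gr_span hG r.
exists (undup s), (fun d => f d *+ count_mem d s); split.
- exact: undup_uniq.
- by move=> d; apply: gr_natmul.
- by rewrite -big_undup_iterop_count.
Qed.

Lemma gr_sum_homog (s : seq int) (f : int -> R) d x :
  uniq s -> (forall k, f k \in G k) -> x \in G d ->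
  \sum_(k <- s) f k = x -> x != 0 -> f d = x.
Proof.
move=> us hf hx sum_x x0.
have [ds|dNs] := boolP (d \in s).
- pose h k := if k == d then f d - x else f k.
  have hh k : h k \in G k.
    by rewrite /h; case: eqP => [->|_]; [apply: (gr_sub hG) | exact: hf].
  have : \sum_(k <- s) h k = 0.
    rewrite (bigD1_seq d) //= {1}/h eqxx.
    rewrite (eq_bigr f) => [|k /negbTE kd]; last by rewrite /h kd.
    by rewrite addrAC -bigD1_seq // sum_x subrr.
  move/(gr_direct hG us hh)/(_ d ds).
  by rewrite /h eqxx => /eqP; rewrite subr_eq0 => /eqP.
- pose h k := if k == d then - x else f k.
  have hh k : h k \in G k.
    by rewrite /h; case: eqP => [->|_]; [apply: gr_opp | exact: hf].
  have uds : uniq (d :: s) by rewrite /= dNs.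
  have : \sum_(k <- d :: s) h k = 0.
    rewrite big_cons {1}/h eqxx (eq_big_seq f) ?sum_x ?addNr // => k ks.
    by rewrite /h; case: eqP => // kd; rewrite -kd ks in dNs.
  move/(gr_direct hG uds hh)/(_ d (mem_head _ _)).
  by rewrite /h eqxx => /eqP; rewrite oppr_eq0 (negbTE x0).
Qed.

Lemma gr_sum_shift_homog (s : seq int) (f : int -> R) c d x :
  uniq s -> (forall k, f k \in G (c + k)) -> x \in G d ->
  \sum_(k <- s) f k = x -> x != 0 -> f (d - c) = x.
Proof.
move=> us hf hx sum_x x0.
have hg j : f (j - c) \in G j by have := hf (j - c); rewrite (addrC c) subrK.
apply: (gr_sum_homog (s := map (+%R c) s) (f := fun j => f (j - c))) => //.
- by rewrite map_inj_uniq //; apply: addrI.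
- by rewrite big_map -sum_x; apply: eq_bigr => k _; rewrite (addrC c) addrK.
Qed.

Lemma gr_invr e u : u \in G e -> u \is a GRing.unit -> u^-1 \in G (- e).
Proof.
move=> hu uu; have [s [v [us hv sum_v]]] := gr_span_uniq u^-1.
have huv k : u * v k \in G (e + k) by apply: (gr_mul hG).
have : \sum_(k <- s) u * v k = 1 by rewrite -mulr_sumr -sum_v mulrV.
move/(gr_sum_shift_homog us huv (gr_one hG))/(_ (oner_neq0 _)).
by rewrite sub0r => uv1; rewrite -[u^-1]mulr1 -uv1 mulKr.
Qed.

End GradedRing.

Definition unit_degree (L : unitRingType) (H : int -> pred L) (m : int) : Prop :=
  exists2 x, x \in H m & x \is a GRing.unit.

Lemma unit_degree0 (L : unitRingType) (H : int -> pred L) :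
  is_graded_ring H -> unit_degree H 0.
Proof. by move=> hH; exists 1; [apply: gr_one | apply: unitr1]. Qed.

Lemma unit_degreeB (L : unitRingType) (H : int -> pred L) :
  is_graded_ring H -> forall a b, unit_degree H a -> unit_degree H b -> unit_degree H (a - b).
Proof.
move=> hH a b [x hx ux] [y hy uy]; exists (x * y^-1); last by rewrite unitrMr ?unitrV.
by apply: (gr_mul hH) => //; apply: gr_invr.
Qed.

Section HomogeneousLocalization.

Variables (R L : unitRingType) (G : int -> pred R) (p : pred R).
Variables (H : int -> pred L) (phi : {rmorphism R -> L}).
Hypotheses (hG : is_graded_ring G) (hp : is_hprime G p).
Hypotheses (hH : is_graded_ring H) (hl : is_hlocalization G p H phi).

Lemma hS_mul s t : hS G p s -> hS G p t -> hS G p (s * t).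
Proof.
move=> [[ds sG] sp] [[dt tG] tp]; split; first by exists (ds + dt); apply: (gr_mul hG).
apply/negP => /(hp_prime hp); have hs : homog G s by exists ds.
have ht : homog G t by exists dt.
by case/(_ hs ht) => [|]; apply/negP.
Qed.

Lemma hS_neq0 s : hS G p s -> s != 0.
Proof. by move=> [_ sp]; apply: contraNneq sp => ->; apply: (hp_zero hp). Qed.

(* From (phi r)^-1 = phi a / phi t we get r a s' = t s' for some homogeneous
   s' outside p; the component of degree deg t + deg s' of the left-hand side
   is then t s', which is outside p, so r cannot be in p. *)
Lemma hl_unit_notin d r : r \in G d -> phi r \is a GRing.unit -> r \notin p.
Proof.
move=> rG ur; have [a [t [St inv_r]]] := hl_frac hl (phi r)^-1.
have ut : phi t \is a GRing.unit by apply: (hl_unit hl).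
have : phi (r * a - t) = 0.
  by rewrite rmorphB rmorphM -[phi a](divrK ut) -inv_r mulVKr // subrr.
move=> /(hl_ker hl) [s' [Ss' ras']].
have e_ras' : r * a * s' = t * s' by apply/eqP; rewrite -subr_eq0 -mulrBl ras'.
have [[dt tG] _] := St; have [[ds' s'G] _] := Ss'; have [_ ts'Np] := hS_mul St Ss'.
have [sa [af [usa haf asum]]] := gr_span_uniq hG a.
have hraf k : r * af k * s' \in G (d + ds' + k).
  by rewrite addrAC; apply: (gr_mul hG) => //; apply: (gr_mul hG).
have : \sum_(k <- sa) r * af k * s' = t * s' by rewrite -e_ras' asum mulr_sumr mulr_suml.
move/(gr_sum_shift_homog hG usa hraf (gr_mul hG tG s'G))/(_ (hS_neq0 (hS_mul St Ss'))).
move=> e_comp; rewrite -e_comp in ts'Np; apply: contra ts'Np => rp.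
by apply: (hp_mulr hp); apply: (hp_mulr hp).
Qed.

Lemma hl_unit_degree d f : f \in G d -> f \notin p -> unit_degree H d.
Proof.
move=> fG fNp; exists (phi f); first exact: (hl_graded hl).
by apply: (hl_unit hl); split => //; exists d.
Qed.

Lemma unit_degree_diff m : unit_degree H m ->
  exists a b fa fb, [/\ fa \in G a, fa \notin p, fb \in G b, fb \notin p & m = a - b].
Proof.
move=> [x hx ux]; have [r [s [Ss xE]]] := hl_frac hl x.
have [[e sG] sNp] := Ss; have us := hl_unit hl Ss.
have uxs : x * phi s \is a GRing.unit by rewrite unitrMl.
have xs0 : x * phi s != 0 by apply: contraTneq uxs => ->; rewrite unitr0.
have [sr [rf [usr hrf rsum]]] := gr_span_uniq hG r.
have hphirf k : phi (rf k) \in H k by apply: (hl_graded hl).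
have : \sum_(k <- sr) phi (rf k) = x * phi s by rewrite -rmorph_sum -rsum xE divrK.
move/(gr_sum_homog hH usr hphirf (gr_mul hH hx (hl_graded hl sG)))/(_ xs0) => rfE.
exists (m + e), e, (rf (m + e)), s; split => //; last by rewrite addrK.
by apply: (hl_unit_notin (hrf _)); rewrite rfE.
Qed.

Lemma unit_degree_dvd (c : int) :
  (forall d, (exists f, [/\ f \in G d, f \notin p & d != 0]) -> (c %| d)%Z) ->
  forall m, unit_degree H m -> (c %| m)%Z.
Proof.
move=> cD m /unit_degree_diff [a [b [fa [fb [faG faNp fbG fbNp ->]]]]].
have dvd_deg d f : f \in G d -> f \notin p -> (c %| d)%Z.
  by move=> fG fNp; have [->|d0] := eqVneq d 0; [exact: dvdz0 | apply: cD; exists f].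
by apply: rpredB; [exact: dvd_deg faG faNp | exact: dvd_deg fbG fbNp].
Qed.

End HomogeneousLocalization.

Definition generates (P : int -> Prop) (g : nat) : Prop :=
  forall m, P m <-> (g%:Z %| m)%Z.

Section IntSubgroup.

Variable P : int -> Prop.
Hypotheses (P0 : P 0) (PB : forall a b, P a -> P b -> P (a - b)).

Lemma subgroupN a : P a -> P (- a).
Proof. by rewrite -sub0r; apply: PB. Qed.

Lemma subgroupD a b : P a -> P b -> P (a + b).
Proof. by move=> Pa Pb; rewrite -[b]opprK; apply: PB => //; apply: subgroupN. Qed.

Lemma subgroupMz (z : int) a : P a -> P (z * a).
Proof.
move=> Pa; have Pnat (k : nat) : P (k%:Z * a).
  by elim: k => [|k IH]; rewrite ?mul0r // intS mulrDl mul1r; apply: subgroupD.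
by case: z => k; rewrite ?NegzE ?mulNr; [apply: Pnat | apply/subgroupN/Pnat].
Qed.

Lemma subgroup_min_generates (g : nat) : (0 < g)%N -> P g ->
  (forall k : nat, (0 < k < g)%N -> ~ P k) -> generates P g.
Proof.
move=> g0 Pg gmin m; split=> [Pm|/dvdzP [z ->]]; last exact: subgroupMz.
have gNZ0 : g%:Z != 0 by rewrite eqz_nat -lt0n.
have : P (m %% g)%Z.
  have -> : (m %% g)%Z = m - (m %/ g)%Z * g.
    by rewrite {2}(divz_eq m g) addrAC subrr add0r.
  by apply: PB => //; apply: subgroupMz.
move=> Pr; apply/dvdz_mod0P; move: (modz_ge0 m gNZ0) (ltz_mod m gNZ0) Pr.
case: (m %% g)%Z => // k _ kg Pk; have [->|k0] := eqVneq k 0%N => //.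
by case: (gmin k) => //; rewrite lt0n k0 -ltz_nat.
Qed.

Lemma subgroup_generator : exists g, generates P g.
Proof.
have [[n [n0 Pn]]|noPos] := classic (exists n : nat, (0 < n)%N /\ P n).
- elim/ltn_ind: n n0 Pn => n IH n0 Pn.
  have [[k [/andP [k0 kn] Pk]]|noLess] := classic (exists k : nat, (0 < k < n)%N /\ P k).
  + exact: IH kn k0 Pk.
  + by exists n; apply: subgroup_min_generates => // k kn Pk; apply: noLess; exists k.
- exists 0%N => m; rewrite dvd0z; split => [Pm|/eqP ->] //.
  case: m Pm => [[|k]|k] Pk //; case: noPos; exists k.+1; split => //.
  by rewrite -[_%:Z]opprK -NegzE; apply: subgroupN.
Qed.

End IntSubgroup.

Lemma generates_is_period (L : unitRingType) (H : int -> pred L) n :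
  generates (unit_degree H) n -> is_period H n.
Proof.
have [->|n0] := posnP n => gen.
- left; split=> // m x m0 hx; apply/negP => ux.
  have := (gen m).1 (ex_intro2 _ _ x hx ux).
  by rewrite dvdzE /= dvd0n => /eqP m_0; rewrite m_0 in m0.
- right; split => //; first by have [x] := (gen n).2 (dvdzz _); exists x.
  move=> m x /andP [m0 mn] hx; apply/negP => ux.
  have := (gen m).1 (ex_intro2 _ _ x hx ux); rewrite dvdzE /= => /(dvdn_leq m0).
  by rewrite leqNgt mn.
Qed.

Lemma is_period_unique (L : unitRingType) (H : int -> pred L) m n :
  is_period H m -> is_period H n -> m = n.
Proof.
have ltn_period m' n' : is_period H m' -> is_period H n' -> ~ (m' < n')%N.
  move=> [[-> none]|[m0 [x [hx ux]] _]] [[-> _]|[n0 [y [hy uy]] nmin]] mn.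
  - by [].
  - by move: (none n' y n0 hy); rewrite uy.
  - by rewrite ltn0 in mn.
  - have m_range : (0 < m' < n')%N by apply/andP.
    by have := nmin m' x m_range hx; rewrite ux.
move=> Pm Pn; apply/eqP; rewrite eqn_leq.
by apply/andP; split; rewrite leqNgt; apply/negP; apply: ltn_period.
Qed.

Lemma generates_is_gcd_set (D P : int -> Prop) g : generates P g ->
  (forall d, D d -> P d) ->
  (forall c, (forall d, D d -> (c %| d)%Z) -> forall m, P m -> (c %| m)%Z) ->
  is_gcd_set D g.
Proof.
move=> gen DP Ddvd; split=> [d /DP /gen // | c cD].
by apply: Ddvd cD _ _; apply/gen.
Qed.

Lemma is_gcd_set_unique (D : int -> Prop) m n :
  is_gcd_set D m -> is_gcd_set D n -> m = n.
Proof.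
move=> [mD mmax] [nD nmax]; have := mmax _ nD; have := nmax _ mD.
by rewrite !dvdzE /= => nm mn; apply/eqP; rewrite eqn_dvd nm mn.
Qed.

Theorem proposition2p14 (R : unitRingType) (G : int -> pred R) (p : pred R)
  (L : unitRingType) (H : int -> pred L) (phi : {rmorphism R -> L}) :
  is_graded_ring G -> is_hprime G p ->
  is_graded_ring H -> is_hlocalization G p H phi ->
  forall n : nat,
    is_period H n <->
    is_gcd_set (fun d : int => exists f : R, [/\ f \in G d, f \notin p & d != 0]) n.
Proof.
move=> hG hp hH hl n; set D := fun d : int => _.
have [g gen] := subgroup_generator (unit_degree0 hH) (unit_degreeB hH).
have per_g := generates_is_period gen.
have gcd_g : is_gcd_set D g.
  apply: (generates_is_gcd_set gen) => [d [f [fG fNp _]] | c].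
    exact: (hl_unit_degree hl fG fNp).
  exact: (unit_degree_dvd hG hp hH hl).
by split => [/(is_period_unique per_g) <- | /(is_gcd_set_unique gcd_g) <-].
Qed.
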